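(* Let $V$ be a finite set, $\pi$ a probability distribution on $V$, $\mathcal{D}$ a finite set, and for all $x\in\mathcal{D}$ let $M_x\subseteq V$ with $\Pr_{v\sim\pi}[v\in M_x]=\varepsilon$ for a fixed $\varepsilon\in(0,1)$. Work in $\mathbb{C}^{\{\perp\}\cup V}$ (with $\perp\notin V$), let $O_x$ be operators on a space $\mathcal{H}$ with $O_x^2=I$, and set \[|\psi_x\rangle=\frac{1}{\sqrt{\varepsilon}}\sum_{v\in M_x}\sqrt{\pi_v}\,|v\rangle.\] Define $R=\{(|\perp\rangle+|\psi_x\rangle,\ |\perp\rangle-|\psi_x\rangle,\ O_x)\}_{x\in\mathcal{D}}$ and $R'=\{(\mathbb{1}_\perp-\tfrac{1}{\varepsilon}\pi|_{M_x},\ \mathbb{1}_\perp+\mathbb{1}_{M_x},\ O_x)\}_{x\in\mathcal{D}}$, where $\pi|_{M_x}$ is the vector equal to $\pi$ on $M_x$ and $0$ elsewhere and $\mathbb{1}_S$ is the indicator vector of $S$. Then the sets of feasible solutions of $R$ and $R'$ are identical, and $R'$ is a hyperedge problem.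
   Context: A state-reflection problem $\{(|\sigma_x^+\rangle,|\sigma_x^-\rangle,O_x)\}_{x\in\mathcal{D}}$ consists of orthogonal vectors $|\sigma_x^\pm\rangle$ in a finite-dimensional space $\mathcal{V}$ and operators $O_x$ on $\mathcal{H}$ with $O_x^2=I$; a feasible solution is a finite-dimensional space $\mathcal{W}$ and vectors $|w_x^s\rangle\in\mathcal{H}\otimes\mathcal{W}$ ($s\in\{+,-\}$) with $\langle\sigma_x^s|\sigma_y^t\rangle-st\langle\sigma_x^s|\sigma_y^t\rangle=\langle w_x^s|((I-O_x^\dagger O_y)\otimes I)|w_y^t\rangle$ for all $x,y$ and $s,t$. A hyperedge problem on a finite set $V'$ is a state-reflection problem over $\mathbb{C}^{V'}$ with $|\sigma_x^+\rangle=\delta_x$, $|\sigma_x^-\rangle=U_x$ such that $\sum_{v}(\delta_x)_v=0$ and $U_x$ is constant on the support of $\delta_x$, for every $x$. *)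

(* Complex scalars: an arbitrary numClosedFieldType C
   (e.g. algC, or R[i] for a real closed field R). *)
From HB Require Import structures.
From mathcomp Require Import all_boot all_order all_algebra.
From mathcomp Require Import mxtens.
Set Implicit Arguments. Unset Strict Implicit. Unset Printing Implicit Defensive.
Import Order.TTheory GRing.Theory Num.Theory.
Local Open Scope ring_scope.

Section Defs.
Variable C : numClosedFieldType.

Definition inner (I : finType) (a b : I -> C) : C :=
  \sum_(i : I) (a i)^* * b i.

Definition adj (m n : nat) (A : 'M[C]_(m, n)) : 'M[C]_(n, m) :=
  map_mx Num.conj (A^T).

Definition sandwich (n : nat) (u : 'cV[C]_n) (A : 'M[C]_n) (v : 'cV[C]_n) : C :=
  (adj u *m A *m v) 0 0.

Definition sgn (s : bool) : C := if s then 1 else -1.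

(* A state-reflection problem over C^I, with H = C^m, indexed by D :
   sig x true = |sigma_x^+>, sig x false = |sigma_x^->, O x = O_x. *)
Definition is_state_reflection (I D : finType) (m : nat)
  (sig : D -> bool -> I -> C) (O : D -> 'M[C]_m) : Prop :=
  (forall x, inner (sig x true) (sig x false) = 0) /\
  (forall x, O x *m O x = 1%:M).

(* feasible solution: W = C^k, and w x s in H (x) W = C^(m*k) *)
Definition feasible (I D : finType) (m : nat)
  (sig : D -> bool -> I -> C) (O : D -> 'M[C]_m)
  (k : nat) (w : D -> bool -> 'cV[C]_(m * k)) : Prop :=
  forall (x y : D) (s t : bool),
    inner (sig x s) (sig y t) - sgn s * sgn t * inner (sig x s) (sig y t)
    = sandwich (w x s) (tensmx (1%:M - adj (O x) *m O y) (1%:M : 'M[C]_k))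
               (w y t).

(* hyperedge problem: sig x true = delta_x, sig x false = U_x *)
Definition is_hyperedge (I D : finType) (m : nat)
  (sig : D -> bool -> I -> C) (O : D -> 'M[C]_m) : Prop :=
  is_state_reflection sig O /\
  (forall x, \sum_(v : I) sig x true v = 0) /\
  (forall x, forall u v : I, sig x true u != 0 -> sig x true v != 0 ->
     sig x false u = sig x false v).

(* vectors in C^({bot} u V), with bot = None *)
Definition ket_bot (V : finType) : option V -> C :=
  fun i => if i is None then 1 else 0.

Definition psi (V : finType) (pi : V -> C) (eps : C) (M : {set V}) : option V -> C :=
  fun i => match i with
           | None => 0
           | Some v => if v \in M then sqrtC (pi v) / sqrtC eps else 0
           end.

Definition sigR (V D : finType) (pi : V -> C) (eps : C) (M : D -> {set V})
  : D -> bool -> option V -> C :=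
  fun x s i => ket_bot i + sgn s * psi pi eps (M x) i.

(* R' : (1_bot - pi|_{M_x} / eps, 1_bot + 1_{M_x}) *)
Definition sigR' (V D : finType) (pi : V -> C) (eps : C) (M : D -> {set V})
  : D -> bool -> option V -> C :=
  fun x s i => match i with
               | None => 1
               | Some v => if v \in M x then
                             (if s then - (pi v / eps) else 1)
                           else 0
               end.
End Defs.

From HB Require Import structures.
From mathcomp Require Import all_boot all_order all_algebra.
From mathcomp Require Import mxtens.
Import Order.TTheory GRing.Theory Num.Theory.
Local Open Scope ring_scope.

(** Feasibility only sees the quantities
    [<sigma_x^s|sigma_y^t> - s t <sigma_x^s|sigma_y^t>], which vanish for
    [s = t] and equal twice the cross inner product [<sigma_x^s|sigma_y^-s>]
    otherwise.  Both [R] and [R'] have cross inner products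
    [1 - (1/eps) pi(M_x /\ M_y)]: for [R] because
    [<psi_x|psi_y> = (1/eps) pi(M_x /\ M_y)].  Taking [x = y] this also gives
    the orthogonality required of [R'], and the remaining hyperedge conditions
    are [pi(M_x) = eps] and the fact that [1_bot + 1_{M_x}] is [1] on the
    support of [1_bot - pi|_{M_x} / eps]. *)

Lemma big_option (R : nmodType) (V : finType) (F : option V -> R) :
  \sum_(i : option V) F i = F None + \sum_(v : V) F (Some v).
Proof.
rewrite (bigD1 None) //=; congr (_ + _).
rewrite (reindex_omap (@Some V) id) => [|[v|]] //.
by apply: eq_bigl => v; rewrite eqxx.
Qed.

Section Feasibility.
Variables (C : numClosedFieldType) (I D : finType) (m : nat).

Lemma sgn_negb (s : bool) : sgn C s * sgn C (~~ s) = -1.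
Proof. by case: s; rewrite /sgn ?mulN1r ?mul1r. Qed.

Lemma conj_sgn (s : bool) : (sgn C s)^* = sgn C s.
Proof. by case: s; rewrite /sgn ?rmorph1 ?conjCN1. Qed.

Lemma sgn_sqr (s : bool) : sgn C s * sgn C s = 1.
Proof. by case: s; rewrite /sgn ?mulrNN mul1r. Qed.

Lemma eq_feasible_cross (sig1 sig2 : D -> bool -> I -> C) (O : D -> 'M[C]_m)
    (k : nat) (w : D -> bool -> 'cV[C]_(m * k)) :
  (forall x y s, inner (sig1 x s) (sig1 y (~~ s)) = inner (sig2 x s) (sig2 y (~~ s))) ->
  feasible sig1 O w <-> feasible sig2 O w.
Proof.
move=> cross.
suff defect x y s t :
    inner (sig1 x s) (sig1 y t) - sgn C s * sgn C t * inner (sig1 x s) (sig1 y t)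
  = inner (sig2 x s) (sig2 y t) - sgn C s * sgn C t * inner (sig2 x s) (sig2 y t).
  by split=> feas x y s t; rewrite -feas defect.
have [<-|neq_st] := eqVneq s t; first by rewrite sgn_sqr !mul1r !subrr.
have -> : t = ~~ s by move: neq_st; case: s; case: t.
by rewrite sgn_negb cross.
Qed.

End Feasibility.

Section ReflectionProblems.
Variables (C : numClosedFieldType) (V D : finType) (pi : V -> C) (eps : C).
Variable M : D -> {set V}.
Hypotheses (pi_ge0 : forall v, 0 <= pi v) (eps_gt0 : 0 < eps).

Let eps_neq0 : eps != 0. Proof. by rewrite lt0r_neq0. Qed.

Lemma conj_pi_div (v : V) : (pi v / eps)^* = pi v / eps.
Proof. by rewrite geC0_conj // divr_ge0 // ltW. Qed.

Lemma conj_sqrt_pi_div (v : V) :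
  (sqrtC (pi v) / sqrtC eps)^* = sqrtC (pi v) / sqrtC eps.
Proof. by rewrite geC0_conj // divr_ge0 // sqrtC_ge0 // ltW. Qed.

Lemma inner_sigR_cross (x y : D) (s : bool) :
  inner (sigR pi eps M x s) (sigR pi eps M y (~~ s))
  = 1 - \sum_(v in M x :&: M y) pi v / eps.
Proof.
rewrite /inner big_option /sigR /= !mulr0 !addr0 rmorph1 mul1r.
rewrite [in RHS]big_mkcond -sumrN; congr (_ + _); apply: eq_bigr => v _.
rewrite !add0r rmorphM /= conj_sgn mulrACA sgn_negb mulN1r in_setI.
case: (v \in M x); case: (v \in M y); rewrite ?(oppr0, mulr0, mul0r, rmorph0) //=.
by rewrite conj_sqrt_pi_div -expr2 exprMn exprVn !sqrtCK.
Qed.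

Lemma inner_sigR'_cross (x y : D) (s : bool) :
  inner (sigR' pi eps M x s) (sigR' pi eps M y (~~ s))
  = 1 - \sum_(v in M x :&: M y) pi v / eps.
Proof.
rewrite /inner big_option /sigR' /= rmorph1 mul1r.
rewrite [in RHS]big_mkcond -sumrN; congr (_ + _); apply: eq_bigr => v _.
rewrite in_setI; case: (v \in M x); case: (v \in M y); case: s;
  by rewrite /= ?(oppr0, mulr0, mul0r, rmorph0, rmorph1, mul1r, mulr1) ?rmorphN /=
       ?conj_pi_div ?mulr1.
Qed.

Hypothesis pi_M : forall x, \sum_(v in M x) pi v = eps.

Lemma inner_sigR'_orth (x : D) :
  inner (sigR' pi eps M x true) (sigR' pi eps M x false) = 0.
Proof.
by rewrite (inner_sigR'_cross x x true) setIid -mulr_suml pi_M divff ?subrr.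
Qed.

Lemma sum_sigR'_true (x : D) : \sum_(i : option V) sigR' pi eps M x true i = 0.
Proof.
rewrite big_option /= (eq_bigr (fun v => if v \in M x then - (pi v / eps) else 0)) //.
by rewrite -big_mkcond /= sumrN -mulr_suml pi_M divff // subrr.
Qed.

Lemma sigR'_false_on_support (x : D) (u : option V) :
  sigR' pi eps M x true u != 0 -> sigR' pi eps M x false u = 1.
Proof. by case: u => [u|] //=; case: (u \in M x); rewrite ?eqxx. Qed.

End ReflectionProblems.

Theorem theorem5p5 (C : numClosedFieldType) (V D : finType) (pi : V -> C)
  (eps : C) (M : D -> {set V}) (m : nat) (O : D -> 'M[C]_m) :
  (forall v, 0 <= pi v) -> \sum_(v : V) pi v = 1 ->
  0 < eps -> eps < 1 ->
  (forall x, \sum_(v in M x) pi v = eps) ->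
  (forall x, O x *m O x = 1%:M) ->
  (forall (k : nat) (w : D -> bool -> 'cV[C]_(m * k)),
     feasible (sigR pi eps M) O w <-> feasible (sigR' pi eps M) O w) /\
  is_hyperedge (sigR' pi eps M) O.
Proof.
move=> pi_ge0 _ eps_gt0 _ pi_M O_invol; split.
  move=> k w; apply: eq_feasible_cross => x y s.
  by rewrite inner_sigR_cross // inner_sigR'_cross.
split; [split|split] => // x.
- exact: inner_sigR'_orth.
- exact: sum_sigR'_true.
- by move=> u v /sigR'_false_on_support -> /sigR'_false_on_support ->.
Qed.
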